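(* Let $n\ge2$ and $P_{II*}=\{\downarrow\{\xi\}:\ \xi\in P_I,\ |\xi|=n-1\}$. For partitions $\xi,\upsilon\in P_I$ with $|\xi|=|\upsilon|=n-1$, one has $\mathcal C_{\{\downarrow\{\xi\}\}\text{-unc}}=\mathcal C_{\{\downarrow\{\upsilon\}\}\text{-unc}}$ (the classes labelled by the filters $\uparrow\{\downarrow\{\xi\}\}\cap P_{II*}=\{\downarrow\{\xi\}\}$ and $\{\downarrow\{\upsilon\}\}$) if and only if $\xi=\upsilon$.
   Context: Let $L=\{1,\dots,n\}$, and for $i\in L$ let $\mathcal H_i$ be a Hilbert space with $1<\dim\mathcal H_i<\infty$; $\mathcal H_X=\bigotimes_{i\in X}\mathcal H_i$ and $\mathcal D_X$ is the set of density operators on $\mathcal H_X$. $P_I$ is the set of partitions of $L$ ordered by refinement; $|\xi|$ is the number of parts of $\xi$, and $\downarrow\{\xi\}=\{\upsilon\in P_I:\upsilon\preceq\xi\}$. For $\xi\in P_I$, $\mathcal D_{\xi\text{-unc}}=\{\varrho\in\mathcal D_L:\varrho=\bigotimes_{X\in\xi}\varrho_X,\ \varrho_X\in\mathcal D_X\}$, and for $S\subseteq P_I$, $\mathcal D_{S\text{-unc}}=\bigcup_{\xi\in S}\mathcal D_{\xi\text{-unc}}$. $P_{II}$ is the set of nonempty down-sets of $P_I$, ordered by inclusion; $P_{III*}$ is the set of nonempty up-sets of $P_{II*}$. For $\Xi\in P_{III*}$: $\overline\Xi=P_{II*}\setminus\Xi$ and $\mathcal C_{\Xi\text{-unc}}=\bigcap_{\boldsymbol\xi'\in\overline\Xi}(\mathcal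 D_L\setminus\mathcal D_{\boldsymbol\xi'\text{-unc}})\cap\bigcap_{\boldsymbol\xi\in\Xi}\mathcal D_{\boldsymbol\xi\text{-unc}}$. *)

From HB Require Import structures.
From mathcomp Require Import all_boot all_order all_algebra.
Set Implicit Arguments. Unset Strict Implicit. Unset Printing Implicit Defensive.
Import Order.TTheory GRing.Theory Num.Theory.
Local Open Scope ring_scope.

(* Parties: L = 'I_n (i.e. {0,...,n-1}, a relabelling of {1,...,n}).
   H_i has dimension d i; its standard basis is 'I_(d i).
   H_X = (x)_{i in X} H_i has basis idx d X = dependent functions
   assigning to each i in X a basis index of H_i. *)
Section Defs.
Variables (C : numClosedFieldType) (n : nat) (d : 'I_n -> nat).

Definition idx (X : {set 'I_n}) :=
  {dffun forall i : {i : 'I_n | i \in X}, 'I_(d (val i))}.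

(* operators on H_X, as matrices in the product basis *)
Definition op (X : {set 'I_n}) := idx X -> idx X -> C.

Definition density (X : {set 'I_n}) (rho : op X) : Prop :=
  [/\ (forall a b, rho b a = (rho a b)^*),
      (forall v : idx X -> C,
          0 <= \sum_(a : idx X) \sum_(b : idx X) (v a)^* * rho a b * v b)
    & \sum_(a : idx X) rho a a = 1].

Definition res (X : {set 'I_n}) (a : idx [set: 'I_n]) : idx X :=
  [ffun i : {i : 'I_n | i \in X} => a (exist _ (val i) (in_setT (val i)))].

Definition PI : {set {set {set 'I_n}}} :=
  [set x : {set {set 'I_n}} | partition x [set: 'I_n]].

Definition refines (u x : {set {set 'I_n}}) : bool :=
  [forall Y in u, [exists X in x, Y \subset X]].

Definition down (x : {set {set 'I_n}}) : {set {set {set 'I_n}}} :=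
  [set u in PI | refines u x].

Definition PIIstar : {set {set {set {set 'I_n}}}} :=
  [set down x | x in [set y in PI | #|y| == n.-1]].

Definition Dunc (x : {set {set 'I_n}}) (rho : op [set: 'I_n]) : Prop :=
  density rho /\
  exists fam : forall X : {set 'I_n}, op X,
    (forall X, X \in x -> density (fam X)) /\
    (forall a b, rho a b = \prod_(X in x) fam X (res X a) (res X b)).

Definition DSunc (S : {set {set {set 'I_n}}}) (rho : op [set: 'I_n]) : Prop :=
  exists2 x, x \in S & Dunc x rho.

Definition Cunc (Xi : {set {set {set {set 'I_n}}}}) (rho : op [set: 'I_n]) : Prop :=
  [/\ density rho,
      (forall S, S \in PIIstar -> S \notin Xi -> ~ DSunc S rho)
    & (forall S, S \in Xi -> DSunc S rho)].

End Defs.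

From HB Require Import structures.
From mathcomp Require Import all_boot all_order all_algebra.
From mathcomp Require Import zify.
Import Order.TTheory GRing.Theory Num.Theory.
Local Open Scope ring_scope.
Set Implicit Arguments. Unset Strict Implicit. Unset Printing Implicit Defensive.

(* A partition [x] of [n] parties into [n - 1] blocks has one block [P] of size 2 and
   singletons otherwise. The classical state [rho_P = (|0..0><0..0| + |1_P><1_P|) / 2] is
   [x]-uncorrelated. If it factors along a partition [v] whose block [V] splits [P], then
   comparing the diagonal entries at [0], [1_P], [1_(P & V)] and [1_(P \ V)] gives
   [1/4 = 0]; so every such [v] keeps [P] in one block, hence [x] refines every [y] with
   [n - 1] blocks for which [rho_P] lies in [D_(down y)-unc], and then [x = y]. Thus
   [rho_P] belongs to [C_({down x})-unc], and equality of the classes forces [x = u]. *)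

Section Partitions.
Variables (T : finType) (D : {set T}).
Implicit Types (x y : {set {set T}}) (P X Y : {set T}).

Lemma partition_refines_card_eq x y : partition x D -> partition y D ->
  (forall X, X \in x -> exists2 Y, Y \in y & X \subset Y) -> #|x| = #|y| -> x = y.
Proof.
move=> px py ref cxy.
have /and3P[/eqP covx _ nx0] := px; have /and3P[/eqP covy ty ny0] := py.
pose g X := \bigcup_(k in X) pblock y k.
have gX X : X \in x -> [/\ g X \in y, X \subset g X & {in X, forall k, pblock y k = g X}].
  move=> Xx; have [Y Yy XY] := ref X Xx.
  have pY : {in X, forall k, pblock y k = Y}.
    by move=> k kX; apply: def_pblock => //; apply: (subsetP XY).
  have [k kX] : exists k, k \in X by apply/set0Pn; apply: contraNneq nx0 => <-.
  suff -> : g X = Y by [].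
  apply/eqP; rewrite eqEsubset; apply/andP; split.
    by apply/bigcupsP => m mX; rewrite pY.
  by rewrite -(pY k kX); apply: (bigcup_sup k).
have in_x Y k : Y \in y -> k \in Y -> pblock x k \in x /\ k \in pblock x k.
  move=> Yy kY; have kc : k \in cover x.
    by rewrite covx -covy; apply: subsetP (bigcup_sup Y Yy) _ _.
  by rewrite pblock_mem ?mem_pblock.
have g_onto : y \subset g @: x.
  apply/subsetP => Y Yy.
  have [k kY] : exists k, k \in Y by apply/set0Pn; apply: contraNneq ny0 => <-.
  have [Xx kX] := in_x Y k Yy kY.
  have [_ _ pX] := gX _ Xx.
  by apply/imsetP; exists (pblock x k); rewrite // -(pX k) ?(def_pblock ty Yy kY).
have g_inj : {in x &, injective g}.
  by apply/imset_injP; rewrite eqn_leq leq_imset_card /= cxy subset_leq_card.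
suff xy : x \subset y by apply/eqP; rewrite eqEcard xy cxy leqnn.
apply/subsetP => X Xx; have [gy sX pX] := gX X Xx.
suff -> : X = g X by [].
apply/eqP; rewrite eqEsubset sX; apply/subsetP => k kg.
have [Xk kX] := in_x _ k gy kg.
have [_ _ pXk] := gX _ Xk.
suff /g_inj <- : g (pblock x k) = g X by [].
by rewrite -(pXk k kX); apply: def_pblock ty gy kg.
Qed.

(* The block sizes minus one sum to [#|D| - #|x| = 1], so exactly one block is not a singleton. *)
Lemma partition_card_predn x : partition x D -> (0 < #|D|)%N -> #|x| = #|D|.-1 ->
  exists2 P, P \in x & forall X, X \in x -> X != P -> exists k, X = [set k].
Proof.
move=> px D_gt0 cx; have /and3P[_ _ nx0] := px.
have X_gt0 X : X \in x -> (0 < #|X|)%N.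
  by move=> Xx; rewrite card_gt0; apply: contraNneq nx0 => <-.
have excess1 : (\sum_(X in x) (#|X| - 1) = 1)%N.
  have := card_partition px.
  have -> : (\sum_(X in x) #|X| = \sum_(X in x) (#|X| - 1) + #|x|)%N.
    by rewrite -sum1_card -big_split /=; apply: eq_bigr => X /X_gt0 ?; rewrite subnK.
  by rewrite cx; lia.
have [P Px P_big] : exists2 P, P \in x & (#|P| - 1 != 0)%N.
  apply/exists_inP; apply: contraT; rewrite negb_exists_in => /forall_inP P1.
  by move: excess1; rewrite big1 // => X /P1; rewrite negbK => /eqP.
exists P => // X Xx XP.
move: excess1; rewrite (bigD1 P) //= (bigD1 X) /=; last by rewrite Xx.
move=> excess1; have /cards1P[k ->] : #|X| == 1%N.
  by have := X_gt0 X Xx; move: P_big excess1; move: (\sum_(i | _) _)%N => s; lia.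
by exists k.
Qed.

Lemma refines_one_block x y P Y : partition x D -> partition y D -> P \in x ->
  (forall X, X \in x -> X != P -> exists k, X = [set k]) -> Y \in y -> P \subset Y ->
  forall X, X \in x -> exists2 Y', Y' \in y & X \subset Y'.
Proof.
move=> /and3P[/eqP covx _ _] /and3P[/eqP covy _ _] Px singl Yy PY X Xx.
have [->|XP] := eqVneq X P; first by exists Y.
have [k Xk] := singl X Xx XP.
have kc : k \in cover y.
  by rewrite covy -covx; apply: subsetP (bigcup_sup X Xx) _ _; rewrite Xk set11.
by exists (pblock y k); rewrite ?pblock_mem // Xk sub1set mem_pblock.
Qed.

End Partitions.

Lemma refinesP n (u x : {set {set 'I_n}}) :
  reflect (forall Y, Y \in u -> exists2 X, X \in x & Y \subset X) (refines u x).
Proof.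
apply: (iffP forall_inP) => ref Y /ref; first by case/exists_inP=> X; exists X.
by case=> X Xx YX; apply/exists_inP; exists X.
Qed.

Section DiagonalStates.
Variables (C : numClosedFieldType) (n : nat) (d : 'I_n -> nat).
Implicit Types (x : {set {set 'I_n}}) (P X : {set 'I_n}).

Lemma partition_res_inj x (a b : idx d [set: 'I_n]) : partition x [set: 'I_n] ->
  (forall X, X \in x -> res X a = res X b) -> a = b.
Proof.
move=> /and3P[/eqP covx _ _] res_ab; apply/ffunP => -[k kT].
have kc : k \in cover x by rewrite covx inE.
have kP : k \in pblock x k by rewrite mem_pblock.
have /ffunP/(_ (exist _ k kP)) := res_ab _ (pblock_mem kc).
by rewrite !ffunE /= (bool_irrelevance kT (in_setT k)).
Qed.

Definition diag_op X (w : idx d X -> C) : op C d X := fun a b => (a == b)%:R * w a.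

Lemma diag_op_density X (w : idx d X -> C) :
  (forall a, 0 <= w a) -> \sum_a w a = 1 -> density (diag_op w).
Proof.
move=> w_ge0 w_sum; split.
- move=> a b; have [->|ab] := eqVneq a b; first by rewrite /diag_op eqxx !mul1r geC0_conj.
  by rewrite /diag_op eq_sym (negbTE ab) !mul0r conjC0.
- move=> vec; apply: sumr_ge0 => a _.
  rewrite (bigD1 a) //= big1 ?addr0 => [|b /negbTE ba]; last first.
    by rewrite /diag_op eq_sym ba mul0r mulr0 mul0r.
  rewrite /diag_op eqxx mul1r -mulrA mulrCA mulr_ge0 //.
  by rewrite mulrC mul_conjC_ge0.
- by rewrite -[RHS]w_sum; apply: eq_bigr => a _; rewrite /diag_op eqxx mul1r.
Qed.

Lemma prod_diag_op x (w : forall X, idx d X -> C) (a b : idx d [set: 'I_n]) :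
  partition x [set: 'I_n] ->
  \prod_(X in x) diag_op (w X) (res X a) (res X b) =
  diag_op (fun c => \prod_(X in x) w X (res X c)) a b.
Proof.
move=> px; rewrite /diag_op big_split /=; congr (_ * _).
have [<-|ab] := eqVneq a b; first by rewrite big1 // => X _; rewrite eqxx.
have [X Xx resX] : exists2 X, X \in x & res X a != res X b.
  apply/exists_inP; apply: contraT; rewrite negb_exists_in => /forall_inP res_ab.
  by case/eqP: ab; apply: partition_res_inj px _ => X /res_ab; rewrite negbK => /eqP.
by rewrite (bigD1 X) //= (negbTE resX) mul0r.
Qed.

Definition mix2 X (c0 c1 a : idx d X) : C := (a == c0)%:R / 2 + (a == c1)%:R / 2.

Lemma mix2_ge0 X (c0 c1 a : idx d X) : 0 <= mix2 c0 c1 a.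
Proof. by rewrite addr_ge0 // divr_ge0 // ler0n. Qed.

Lemma mix2_sum X (c0 c1 : idx d X) : \sum_a mix2 c0 c1 a = 1.
Proof.
have sum_eq c : \sum_a ((a == c)%:R : C) = 1.
  by rewrite (bigD1 c) //= eqxx big1 ?addr0 // => a /negbTE ->.
by rewrite big_split /= -!mulr_suml !sum_eq -splitr.
Qed.

Lemma mix2_same X (c a : idx d X) : mix2 c c a = (a == c)%:R.
Proof. by rewrite /mix2 -splitr. Qed.

Lemma mix2_prod x P (c0 c1 a : idx d [set: 'I_n]) :
  partition x [set: 'I_n] -> P \in x ->
  (forall X, X \in x -> X != P -> res X c0 = res X c1) ->
  mix2 c0 c1 a = \prod_(X in x) mix2 (res X c0) (res X c1) (res X a).
Proof.
move=> px Px c01; rewrite (bigD1 P) //=.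
under eq_bigr => X /andP[Xx XP] do rewrite (c01 X Xx XP) mix2_same.
have [agree|[X /andP[Xx XP] resX]] :
    (forall X, X \in x -> X != P -> res X a = res X c1) \/
    exists2 X, (X \in x) && (X != P) & res X a != res X c1.
- case: (boolP [forall X in x, (X != P) ==> (res X a == res X c1)]).
    by move=> /forall_inP H; left=> X Xx XP; apply/eqP; apply: (implyP (H X Xx)).
  by move=> /forall_inPn[X Xx]; rewrite negb_imply => /andP[XP ?]; right; exists X; rewrite ?Xx.
- rewrite big1 ?mulr1 => [|X /andP[Xx XP]]; last by rewrite agree ?eqxx.
  have eq_res c : (forall X, X \in x -> X != P -> res X c = res X c1) ->
      (a == c) = (res P a == res P c).
    move=> cagree; apply/eqP/eqP => [->//|aP]; apply: partition_res_inj px _ => X Xx.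
    by have [->//|XP] := eqVneq X P; rewrite agree ?cagree.
  by rewrite /mix2 (eq_res c0) ?(eq_res c1) // => X Xx XP; rewrite c01.
- rewrite (bigD1 X) /=; last by rewrite Xx XP.
  rewrite (negbTE resX) mul0r mulr0 /mix2.
  have /negbTE-> : a != c0 by apply: contraNneq resX => ->; rewrite c01.
  have /negbTE-> : a != c1 by apply: contraNneq resX => ->.
  by rewrite mul0r addr0.
Qed.

End DiagonalStates.

Arguments mix2 {C n d X}.

Section BlockState.
Variables (C : numClosedFieldType) (n : nat) (d : 'I_n -> nat).
Hypothesis hd : forall i, (1 < d i)%N.
Implicit Types (x v : {set {set 'I_n}}) (S P V W : {set 'I_n}).

(* Digit 1 at the parties of [S], digit 0 elsewhere; digit 1 exists since [d i >= 2]. *)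
Definition bits S : idx d [set: 'I_n] :=
  [ffun k => if val k \in S then Ordinal (hd (val k)) else Ordinal (ltnW (hd (val k)))].

Lemma res_bits W S S' : S :&: W = S' :&: W -> res W (bits S) = res W (bits S').
Proof.
move=> /setP SW; apply/ffunP => -[k kW]; rewrite !ffunE /=.
by have := SW k; rewrite !inE kW !andbT => ->.
Qed.

Lemma bits_neq S S' i : i \in S -> i \notin S' -> bits S != bits S'.
Proof.
move=> iS iS'; apply/eqP => /(congr1 (fun a : idx d _ => val (a (exist _ i (in_setT i))))).
by rewrite !ffunE /= iS (negbTE iS').
Qed.

Lemma res_bits_disjoint W S : [disjoint W & S] -> res W (bits S) = res W (bits set0).
Proof.
by move=> WS; apply: res_bits; rewrite set0I setIC; apply: disjoint_setI0.
Qed.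

Definition block_state P : op C d [set: 'I_n] := diag_op (mix2 (bits set0) (bits P)).

Lemma block_state_unc x P : partition x [set: 'I_n] -> P \in x -> Dunc x (block_state P).
Proof.
move=> px Px; split.
  by apply: diag_op_density; [exact: mix2_ge0 | exact: mix2_sum].
exists (fun X => diag_op (mix2 (res X (bits set0)) (res X (bits P)))); split.
  by move=> X _; apply: diag_op_density; [exact: mix2_ge0 | exact: mix2_sum].
move=> a b; rewrite prod_diag_op // /block_state /diag_op; congr (_ * _).
rewrite (mix2_prod _ _ px Px) => [//|X Xx XP]; rewrite res_bits_disjoint //.
by have /and3P[_ /trivIsetP tx _] := px; apply: tx.
Qed.

(* In a product state the diagonal entries at [bits] indices factor block by block, and
   splitting [S] along a block [V] only permutes the factors. *)
Lemma prod_state_split_bits v (fam : forall W, op C d W) (rho : op C d [set: 'I_n]) S V :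
  partition v [set: 'I_n] -> V \in v ->
  (forall a b, rho a b = \prod_(W in v) fam W (res W a) (res W b)) ->
  rho (bits set0) (bits set0) * rho (bits S) (bits S) =
  rho (bits (S :&: V)) (bits (S :&: V)) * rho (bits (S :\: V)) (bits (S :\: V)).
Proof.
move=> /and3P[_ /trivIsetP tv _] Vv rho_prod.
rewrite !rho_prod -!big_split; apply: eq_bigr => W Wv /=.
have [->|WV] := eqVneq W V.
  rewrite (@res_bits V (S :&: V) S) ?(@res_bits V (S :\: V) set0) 1?mulrC //.
    by apply/setP => k; rewrite !inE; case: (k \in V); rewrite ?andbF.
  by rewrite -setIA setIid.
have /setP WV0 := disjoint_setI0 (tv _ _ Wv Vv WV).
rewrite (@res_bits W (S :&: V) set0) ?(@res_bits W (S :\: V) S) //.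
  by apply/setP => k; have := WV0 k; rewrite !inE; case: (k \in S); case: (k \in V); case: (k \in W).
by apply/setP => k; have := WV0 k; rewrite !inE; case: (k \in S); case: (k \in V); case: (k \in W).
Qed.

(* If [P] met two blocks, the split identity would equate [1/4] with [0]. *)
Lemma block_state_unc_pblock v P i :
  partition v [set: 'I_n] -> Dunc v (block_state P) -> i \in P -> P \subset pblock v i.
Proof.
move=> pv [_ [fam [_ rho_prod]]] iP; apply/subsetP => k kP; apply: contraT => kV.
have /and3P[/eqP covv _ _] := pv.
have Vv : pblock v i \in v by apply: pblock_mem; rewrite covv inE.
have iV : i \in pblock v i by rewrite mem_pblock covv inE.
have := prod_state_split_bits P pv Vv rho_prod.
set V := pblock v i in kV Vv iV *.
have /negbTE P0 : bits P != bits set0 by apply: (bits_neq (i := i)); rewrite ?inE.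
have /negbTE PV0 : bits (P :&: V) != bits set0 by apply: (bits_neq (i := i)); rewrite ?inE ?iP.
have /negbTE PVP : bits (P :&: V) != bits P.
  by rewrite eq_sym; apply: (bits_neq (i := k)); rewrite // inE (negbTE kV) andbF.
rewrite /block_state /diag_op /mix2 !eqxx P0 (eq_sym (bits set0)) P0 PV0 PVP => /eqP.
by rewrite !(mul0r, mul1r, addr0, add0r) mulf_eq0 orbb invr_eq0 pnatr_eq0.
Qed.

End BlockState.

Theorem proposition8 (C : numClosedFieldType) (n : nat) (d : 'I_n -> nat)
    (hd : forall i, (1 < d i)%N) (hn : (2 <= n)%N)
    (x u : {set {set 'I_n}})
    (hx : x \in PI n) (hu : u \in PI n)
    (hxn : #|x| = n.-1) (hun : #|u| = n.-1) :
  (forall rho : op C d [set: 'I_n],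
      @Cunc C n d [set down x] rho <-> @Cunc C n d [set down u] rho)
  <-> x = u.
Proof.
split=> [eq_Cunc|-> //].
have px : partition x [set: 'I_n] by rewrite inE in hx.
have [P Px singl] : exists2 P, P \in x & forall X, X \in x -> X != P -> exists k, X = [set k].
  by apply: partition_card_predn px _ _; rewrite cardsT card_ord // ltnW.
have [i iP] : exists i, i \in P.
  by apply/set0Pn; have /and3P[_ _ nx0] := px; apply: contraNneq nx0 => <-.
pose rho := block_state C hd P.
have unc_eq y : y \in PI n -> #|y| = n.-1 -> DSunc (down y) rho -> x = y.
  rewrite inE => py yn [v]; rewrite inE => /andP[pv /refinesP v_y] Dv; rewrite inE in pv.
  have /and3P[/eqP covv _ _] := pv.
  have [Y Yy VY] : exists2 Y, Y \in y & pblock v i \subset Y.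
    by apply: v_y; apply: pblock_mem; rewrite covv inE.
  apply: (partition_refines_card_eq px py); last by rewrite hxn yn.
  apply: (refines_one_block px py Px singl Yy).
  exact: subset_trans (block_state_unc_pblock pv Dv iP) VY.
have rho_Cunc : Cunc [set down x] rho.
  have [rho_density _] := block_state_unc C hd px Px.
  split=> // [S /imsetP[y] | S /set1P ->].
    by rewrite inE => /andP[py /eqP yn] -> + /(unc_eq y py yn) xy; rewrite xy set11.
  exists x; last exact: block_state_unc.
  by rewrite inE hx; apply/refinesP => X Xx; exists X.
have [_ _ /(_ (down u) (set11 _))] := (eq_Cunc rho).1 rho_Cunc.
exact: unc_eq.
Qed.
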